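(* Let $\mathcal K$ be an even normalized kernel with $3\le\mathfrak m_4$, let $w_1,w_2>0$, $u_1\le u_2$ real and $\sigma>0$, and set $$\tilde u=\frac{w_1u_1+w_2u_2}{w_1+w_2}+\frac{4(\mathfrak m_4-3)\sigma^2(w_1-w_2)(u_1-u_2)}{(w_1+w_2)[(u_1-u_2)^2+2(\mathfrak m_4-3)\sigma^2]}$$ (the second term being $0$ when $u_1=u_2$), and $g(u)=(u-u_1)^2(u-u_2)^2(u-\tilde u)$. If the constants $c_1,c_2$ satisfy $c_1>0$ and $0<c_2<\frac56c_1^2$, then for every $s>0$ the polynomial $$h(u;s)=g(u)-c_1s\,g^{(2)}(u)+c_2s^2g^{(4)}(u)$$ has $5$ distinct real roots.
   Context: $\mathcal K:\mathbb R\to[0,\infty)$ is a kernel with $\mathfrak m_j:=\int_{\mathbb R}\xi^j\mathcal K(\xi)\,d\xi<\infty$ for all $j$, normalized so that $\mathfrak m_0=1,\mathfrak m_1=0,\mathfrak m_2=1$; $g^{(k)}$ denotes the $k$-th derivative of $g$ in $u$. *)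

From HB Require Import structures.
From mathcomp Require Import all_boot all_order all_algebra.
From mathcomp Require Import all_classical all_reals all_analysis.
Set Implicit Arguments. Unset Strict Implicit. Unset Printing Implicit Defensive.
Import Order.TTheory GRing.Theory Num.Theory.
Local Open Scope ring_scope.
Local Open Scope classical_set_scope.

Definition moment (R : realType) (K : R -> R) (j : nat) : R :=
  Rintegral (@lebesgue_measure R) setT (fun x => x ^+ j * K x).

Definition normalized_kernel (R : realType) (K : R -> R) : Prop :=
  (forall x, 0 <= K x) /\
  (forall j : nat,
     (@lebesgue_measure R).-integrable setT (fun x => (x ^+ j * K x)%:E)) /\
  moment K 0 = 1 /\ moment K 1 = 0 /\ moment K 2 = 1.

Definition even_kernel (R : realType) (K : R -> R) : Prop :=
  forall x, K (- x) = K x.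

Definition utilde (R : realType) (m4 w1 w2 u1 u2 sigma : R) : R :=
  (w1 * u1 + w2 * u2) / (w1 + w2) +
  (if u1 == u2 then 0 else
     4 * (m4 - 3) * sigma ^+ 2 * (w1 - w2) * (u1 - u2) /
     ((w1 + w2) * ((u1 - u2) ^+ 2 + 2 * (m4 - 3) * sigma ^+ 2))).

Definition gpoly (R : realType) (m4 w1 w2 u1 u2 sigma : R) : {poly R} :=
  ('X - u1%:P) ^+ 2 * ('X - u2%:P) ^+ 2 * ('X - (utilde m4 w1 w2 u1 u2 sigma)%:P).

Definition hpoly (R : realType) (m4 w1 w2 u1 u2 sigma c1 c2 s : R) : {poly R} :=
  let g := gpoly m4 w1 w2 u1 u2 sigma in
  g - (c1 * s) *: g^`(2) + (c2 * s ^+ 2) *: g^`(4).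

From HB Require Import structures.
From mathcomp Require Import all_boot all_order all_algebra.
From mathcomp Require Import all_classical all_reals all_analysis.
From mathcomp Require Import polyrcf ring lra.
From mathcomp Require cauchyreals.
Set Implicit Arguments. Unset Strict Implicit. Unset Printing Implicit Defensive.
Import Order.TTheory GRing.Theory Num.Theory.
Local Open Scope ring_scope.

(* Put c = (u1 + u2) / 2, d = (u2 - u1) / 2 and t = u~ - c, so that
   g (c + v) = (v^2 - d^2)^2 (v - t).  The smoothing p |-> p - a p'' + b p''''
   (here a = c1 s, b = c2 s^2) commutes with translations, and
   h (c + v) = v O(v^2) - t E(v^2) for two explicit monic quadratics E and O.
   When b < 5 a^2 / 6, E has two positive roots y- < y+ with O(y-) > 0 > O(y+).
   At v = +-sqrt(y-), +-sqrt(y+) the t-term vanishes, so whatever u~ is, h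
   alternates in sign at c - sqrt(y+) < c - sqrt(y-) < c + sqrt(y-) < c + sqrt(y+);
   as h is a monic quintic, it also changes sign before the first and after the
   last of these points.  Five sign changes give five distinct roots.  The
   kernel and the actual value of u~ play no role. *)

Lemma roots_between_sign_changes (R : rcfType) (p : {poly R}) (x0 : R) (xs : seq R) :
  path (fun x y => (x < y) && (p.[x] * p.[y] < 0)) x0 xs ->
  exists rs, [/\ size rs = size xs, path <%R x0 rs & all (root p) rs].
Proof.
elim: xs x0 => [|x1 xs IHxs] x0 /=; first by exists [::].
case/andP => /andP[x01 px01] /IHxs [rs [size_rs x1_rs root_rs]].
have [r] := poly_ivtoo (ltW x01) px01.
rewrite in_itv /= => /andP[x0r rx1] root_r.
exists (r :: rs); split => /=; [by rewrite size_rs | | by rewrite root_r].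
rewrite x0r /=; case: rs x1_rs {size_rs root_rs} => //= r1 rs /andP[x1r1 ->].
by rewrite (lt_trans rx1 x1r1).
Qed.

Lemma odd_degree_poly_sign_infty (R : realFieldType) (p : {poly R}) :
  0 < lead_coef p -> ~~ odd (size p) ->
  exists M, forall x, M <= x -> p.[- x] < 0 < p.[x].
Proof.
move=> lp_gt0 even_size.
have p_neq0 : p != 0 by rewrite -lead_coef_eq0 gt_eqF.
pose q := - (p \Po - 'X).
have lead_q : lead_coef q = lead_coef p.
  move: even_size; rewrite polySpred //= negbK => odd_deg.
  rewrite lead_coefN lead_coef_comp ?size_polyN ?size_polyX //.
  by rewrite lead_coefN lead_coefX -signr_odd odd_deg mulrN1 opprK.
have [M1 HM1] := poly_pinfty_gt_lc lp_gt0.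
have [M2 HM2] : exists M2, forall x, M2 <= x -> lead_coef p <= q.[x].
  by rewrite -lead_q; apply: poly_pinfty_gt_lc; rewrite lead_q.
exists (Num.max M1 M2) => x; rewrite ge_max => /andP[/HM1 px /HM2 qx].
have -> : p.[- x] = - q.[x] by rewrite /q hornerN horner_comp hornerN hornerX opprK.
by rewrite oppr_lt0 !(lt_le_trans lp_gt0).
Qed.

Definition smoothing (R : nzRingType) (a b : R) (p : {poly R}) : {poly R} :=
  p - a *: p^`(2) + b *: p^`(4).

Section Smoothing.

Variables (R : realDomainType) (a b : R).

Lemma size_scale_derivn_lt (k : R) (p : {poly R}) n :
  p != 0 -> (0 < n)%N -> (size (k *: p^`(n))%R < size p)%N.
Proof.
move=> p_neq0 n_gt0; rewrite (leq_ltn_trans (size_scale_leq _ _)) //.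
by rewrite cauchyreals.size_derivn ltn_subrL n_gt0 size_poly_gt0.
Qed.

Lemma size_smoothing_correction_lt (p : {poly R}) :
  p != 0 -> (size (b *: p^`(4) - a *: p^`(2))%R < size p)%N.
Proof.
move=> p_neq0; rewrite (leq_ltn_trans (size_polyD _ _)) // size_polyN gtn_max.
by rewrite !size_scale_derivn_lt.
Qed.

Lemma smoothingE (p : {poly R}) : smoothing a b p = p + (b *: p^`(4) - a *: p^`(2)).
Proof. by rewrite /smoothing addrAC -addrA. Qed.

Lemma smoothing0 : smoothing a b 0 = 0.
Proof. by rewrite /smoothing -polyC0 !derivnC !scaler0 subr0 addr0. Qed.

Lemma lead_coef_smoothing (p : {poly R}) : lead_coef (smoothing a b p) = lead_coef p.
Proof.
have [->|p_neq0] := eqVneq p 0; first by rewrite smoothing0.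
by rewrite smoothingE lead_coefDl // size_smoothing_correction_lt.
Qed.

Lemma size_smoothing (p : {poly R}) : size (smoothing a b p) = size p.
Proof.
have [->|p_neq0] := eqVneq p 0; first by rewrite smoothing0.
by rewrite smoothingE size_polyDl // size_smoothing_correction_lt.
Qed.

End Smoothing.

Lemma derivn_comp_shift (R : comNzRingType) (c : R) (p : {poly R}) n :
  (p \Po ('X + c%:P))^`(n) = p^`(n) \Po ('X + c%:P).
Proof.
elim: n => [|n IHn]; first by rewrite !derivn0.
by rewrite !derivnS IHn deriv_comp derivD derivX derivC addr0 mulr1.
Qed.

Lemma smoothing_comp_shift (R : comNzRingType) (a b c : R) (p : {poly R}) :
  smoothing a b (p \Po ('X + c%:P)) = smoothing a b p \Po ('X + c%:P).
Proof. by rewrite /smoothing !derivn_comp_shift comp_polyD comp_polyB !comp_polyZ. Qed.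

(* The smoothing of ('X^2 - d^2)^2 is [smooth_even d a b] evaluated at 'X^2,
   that of 'X * ('X^2 - d^2)^2 is 'X times [smooth_odd d a b] evaluated at 'X^2. *)
Definition smooth_even (R : nzRingType) (d a b y : R) : R :=
  y ^+ 2 - (2 * d ^+ 2 + 12 * a) * y + (d ^+ 4 + 4 * a * d ^+ 2 + 24 * b).

Definition smooth_odd (R : nzRingType) (d a b y : R) : R :=
  y ^+ 2 - (2 * d ^+ 2 + 20 * a) * y + (d ^+ 4 + 12 * a * d ^+ 2 + 120 * b).

Definition centered_smoothing (R : nzRingType) (d t a b v : R) : R :=
  v * smooth_odd d a b (v ^+ 2) - t * smooth_even d a b (v ^+ 2).

Lemma smoothing_centeredE (R : comNzRingType) (d t a b v : R) :
  (smoothing a b (('X + d%:P) ^+ 2 * ('X - d%:P) ^+ 2 * ('X - t%:P))).[v] =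
  centered_smoothing d t a b v.
Proof.
have -> : ('X + d%:P) ^+ 2 * ('X - d%:P) ^+ 2 * ('X - t%:P) =
    'X^5 - t *: 'X^4 - (2 * d ^+ 2) *: 'X^3 + (2 * d ^+ 2 * t) *: 'X^2
    + d ^+ 4 *: 'X^1 - (d ^+ 4 * t) *: 'X^0.
  rewrite -!mul_polyC !(rmorphM, rmorphXn) /= expr0 expr1; ring.
rewrite /smoothing !(derivnD, derivnN, derivnZ, derivnXn).
rewrite !(hornerD, hornerN, hornerZ, hornerMn, hornerXn).
rewrite !ffactnS !ffactn0 !subSS !subn0 !sub0n ![predn _]/=.
rewrite /centered_smoothing /smooth_odd /smooth_even; ring.
Qed.

Definition double_root_quintic (R : nzRingType) (c d t : R) : {poly R} :=
  ('X - (c - d)%:P) ^+ 2 * ('X - (c + d)%:P) ^+ 2 * ('X - (c + t)%:P).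

Lemma smoothing_double_root_quinticE (R : comNzRingType) (c d t a b v : R) :
  (smoothing a b (double_root_quintic c d t)).[c + v] = centered_smoothing d t a b v.
Proof.
have -> : c + v = ('X + c%:P).[v] by rewrite hornerD hornerX hornerC addrC.
rewrite -horner_comp -smoothing_comp_shift -smoothing_centeredE.
congr (_.[_]); congr smoothing.
rewrite /double_root_quintic !expr2 !rmorphM /= !comp_polyB comp_polyX !comp_polyC.
by rewrite !(rmorphB, rmorphD) /=; ring.
Qed.

Lemma smooth_even_factor (R : rcfType) (d a b : R) :
  0 < a -> 0 < b -> b < 5 / 6 * a ^+ 2 -> exists ym yp,
  [/\ 0 < ym, ym < yp & forall y, smooth_even d a b y = (y - ym) * (y - yp)].
Proof.
move=> a_gt0 b_gt0 b_lt.
pose e := d ^+ 2 + 6 * a.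
pose D := 8 * a * d ^+ 2 + 36 * a ^+ 2 - 24 * b.
have d2_ge0 : 0 <= d ^+ 2 by rewrite sqr_ge0.
have ad2_ge0 : 0 <= a * d ^+ 2 by rewrite mulr_ge0 // ltW.
have d4_ge0 : 0 <= d ^+ 4 by rewrite -[4%N]/(2 * 2)%N exprM sqr_ge0.
have a2_gt0 : 0 < a ^+ 2 by rewrite exprn_gt0.
have D_gt0 : 0 < D by rewrite /D; lra.
pose q := Num.sqrt D.
have q_gt0 : 0 < q by rewrite sqrtr_gt0.
have q2 : q ^+ 2 = D by rewrite sqr_sqrtr // ltW.
have e_gt0 : 0 < e by rewrite /e; lra.
have roots_prod : (e - q) * (e + q) = d ^+ 4 + 4 * a * d ^+ 2 + 24 * b.
  by rewrite -subr_sqr q2 /e /D; ring.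
exists (e - q), (e + q); split.
- by rewrite -(pmulr_lgt0 _ (_ : 0 < e + q)) ?roots_prod; lra.
- lra.
- move=> y; have -> : (y - (e - q)) * (y - (e + q)) = y ^+ 2 - 2 * e * y + (e - q) * (e + q).
    by ring.
  by rewrite roots_prod /smooth_even /e; ring.
Qed.

Lemma smooth_even_lt0 (R : realFieldType) (d a b : R) :
  0 < a -> 0 < b -> b < 5 / 6 * a ^+ 2 ->
  smooth_even d a b ((a * d ^+ 2 + 12 * b) / a) < 0.
Proof.
move=> a_gt0 b_gt0 b_lt.
have -> : smooth_even d a b ((a * d ^+ 2 + 12 * b) / a) =
    (144 * b ^+ 2 - 120 * a ^+ 2 * b - 8 * a ^+ 3 * d ^+ 2) / a ^+ 2.
  by rewrite /smooth_even; field; rewrite gt_eqF.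
rewrite pmulr_llt0 ?invr_gt0 ?exprn_gt0 //.
have : 144 * b ^+ 2 < 120 * a ^+ 2 * b.
  by rewrite [_ * b ^+ 2]mulrA [_ ^+ 2]expr2 mulrA ltr_pM2r //; lra.
have : 0 <= a ^+ 3 * d ^+ 2 by rewrite mulr_ge0 ?sqr_ge0 ?exprn_ge0 // ltW.
lra.
Qed.

Lemma smooth_odd_at_even_roots (R : rcfType) (d a b : R) :
  0 < a -> 0 < b -> b < 5 / 6 * a ^+ 2 -> exists ym yp,
  [/\ 0 < ym < yp, smooth_even d a b ym = 0, smooth_even d a b yp = 0,
      0 < smooth_odd d a b ym & smooth_odd d a b yp < 0].
Proof.
move=> a_gt0 b_gt0 b_lt.
have [ym [yp [ym_gt0 ym_lt_yp factorE]]] := smooth_even_factor d a_gt0 b_gt0 b_lt.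
pose z := (a * d ^+ 2 + 12 * b) / a.
have neg_at_z : (z - ym) * (z - yp) < 0 by rewrite -factorE smooth_even_lt0.
have ym_lt_z : ym < z.
  rewrite ltNge; apply/negP => z_le_ym.
  have : 0 <= (z - ym) * (z - yp).
    by rewrite mulr_le0 // subr_le0 // (le_trans z_le_ym (ltW ym_lt_yp)).
  lra.
have z_lt_yp : z < yp.
  rewrite ltNge; apply/negP => yp_le_z.
  have : 0 <= (z - ym) * (z - yp).
    by rewrite mulr_ge0 // subr_ge0 // ltW // (lt_le_trans ym_lt_yp).
  lra.
have oddE y : smooth_odd d a b y = smooth_even d a b y + 8 * a * (z - y).
  by rewrite /smooth_odd /smooth_even /z; field; rewrite gt_eqF.
exists ym, yp; rewrite !oddE !factorE !subrr !mul0r ?mulr0 !add0r ym_gt0 ym_lt_yp.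
split => //; first by rewrite !mulr_gt0 // subr_gt0.
by rewrite pmulr_rlt0 ?mulr_gt0 // subr_lt0.
Qed.

Lemma centered_smoothing_sign_changes (R : rcfType) (d t a b : R) :
  0 < a -> 0 < b -> b < 5 / 6 * a ^+ 2 -> exists r1 r2,
  [/\ 0 < r1 < r2, 0 < centered_smoothing d t a b (- r2),
      centered_smoothing d t a b (- r1) < 0, 0 < centered_smoothing d t a b r1
    & centered_smoothing d t a b r2 < 0].
Proof.
move=> a_gt0 b_gt0 b_lt.
have [ym [yp [/andP[ym_gt0 ym_lt_yp] even_ym even_yp odd_ym odd_yp]]] :=
  smooth_odd_at_even_roots d a_gt0 b_gt0 b_lt.
have yp_gt0 : 0 < yp := lt_trans ym_gt0 ym_lt_yp.
have at_even_root r y : r ^+ 2 = y -> smooth_even d a b y = 0 ->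
    centered_smoothing d t a b r = r * smooth_odd d a b y.
  by move=> <- even0; rewrite /centered_smoothing even0 mulr0 subr0.
have sq_ym : Num.sqrt ym ^+ 2 = ym by rewrite sqr_sqrtr // ltW.
have sq_yp : Num.sqrt yp ^+ 2 = yp by rewrite sqr_sqrtr // ltW.
exists (Num.sqrt ym), (Num.sqrt yp).
rewrite (at_even_root _ _ sq_ym) // (at_even_root _ _ sq_yp) //.
rewrite (at_even_root (- Num.sqrt ym) ym) ?sqrrN //.
rewrite (at_even_root (- Num.sqrt yp) yp) ?sqrrN //.
rewrite !mulNr oppr_gt0 oppr_lt0 sqrtr_gt0 ym_gt0 ltr_sqrt // ym_lt_yp.
by rewrite pmulr_rlt0 ?pmulr_rgt0 ?sqrtr_gt0.
Qed.

Lemma smoothing_double_root_quintic_infty (R : realFieldType) (c d t a b : R) :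
  exists M, forall x, M <= x ->
    (smoothing a b (double_root_quintic c d t)).[- x] < 0 <
    (smoothing a b (double_root_quintic c d t)).[x].
Proof.
have -> : double_root_quintic c d t =
    \prod_(r <- [:: c - d; c - d; c + d; c + d; c + t]) ('X - r%:P).
  by rewrite !big_cons big_nil mulr1 /double_root_quintic; ring.
apply: odd_degree_poly_sign_infty; last by rewrite size_smoothing size_prod_XsubC.
by rewrite lead_coef_smoothing (eqP (monic_prod_XsubC _ _ _)) ltr01.
Qed.

Lemma smoothing_double_root_quintic_roots (R : rcfType) (c d t a b : R) :
  0 < a -> 0 < b -> b < 5 / 6 * a ^+ 2 -> exists rs,
  [/\ size rs = 5%N, uniq rs & all (root (smoothing a b (double_root_quintic c d t))) rs].
Proof.
move=> a_gt0 b_gt0 b_lt; set h := smoothing a b _.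
have hE v : h.[c + v] = centered_smoothing d t a b v.
  exact: smoothing_double_root_quinticE.
have [r1 [r2 [/andP[r1_gt0 r1_lt_r2] hr2N hr1N hr1 hr2]]] :=
  centered_smoothing_sign_changes d t a_gt0 b_gt0 b_lt.
have [M hM] := smoothing_double_root_quintic_infty c d t a b.
pose X := Num.max M (`|c| + r2 + 1).
have /andP[hXN hX] : h.[- X] < 0 < h.[X] by rewrite hM // le_max lexx.
have X_gt : `|c| + r2 < X by rewrite lt_max ltrDl ltr01 orbT.
have /andP[c_ge c_le] : - `|c| <= c <= `|c| by rewrite -ler_norml.
have sign_path : path (fun x y => (x < y) && (h.[x] * h.[y] < 0))
    (- X) [:: c - r2; c - r1; c + r1; c + r2; X].
  by rewrite /= !hE -!andbA; repeat (apply/andP; split); nra.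
have [rs [size_rs lt_rs roots_rs]] := roots_between_sign_changes sign_path.
by exists rs; rewrite size_rs roots_rs (lt_sorted_uniq (path_sorted lt_rs)).
Qed.

Theorem proposition4p3 (R : realType) (K : R -> R)
  (w1 w2 u1 u2 sigma c1 c2 : R) :
  normalized_kernel K -> even_kernel K -> 3 <= moment K 4 ->
  0 < w1 -> 0 < w2 -> u1 <= u2 -> 0 < sigma ->
  0 < c1 -> 0 < c2 -> c2 < 5 / 6 * c1 ^+ 2 ->
  forall s : R, 0 < s ->
    exists rs : seq R,
      [/\ size rs = 5%N, uniq rs &
          all (root (hpoly (moment K 4) w1 w2 u1 u2 sigma c1 c2 s)) rs].
Proof.
move=> _ _ _ _ _ _ _ c1_gt0 c2_gt0 c2_lt s s_gt0.
pose c := (u1 + u2) / 2; pose d := (u2 - u1) / 2.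
pose t := utilde (moment K 4) w1 w2 u1 u2 sigma - c.
have -> : hpoly (moment K 4) w1 w2 u1 u2 sigma c1 c2 s =
    smoothing (c1 * s) (c2 * s ^+ 2) (double_root_quintic c d t).
  have u1E : c - d = u1 by rewrite /c /d; field.
  have u2E : c + d = u2 by rewrite /c /d; field.
  by rewrite /double_root_quintic u1E u2E [c + t]addrC /t subrK.
apply: smoothing_double_root_quintic_roots; rewrite ?mulr_gt0 ?exprn_gt0 //.
have -> : 5 / 6 * (c1 * s) ^+ 2 = 5 / 6 * c1 ^+ 2 * s ^+ 2 by ring.
by rewrite ltr_pM2r // exprn_gt0.
Qed.
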